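(* Let $X_1\in\mathbb{R}^{n_1\times d}$ and $X_2\in\mathbb{R}^{n_2\times d}$ be two data matrices with $\|X_1\|,\|X_2\|\le 1$ and $\operatorname{rank}(X_m)<d$, and consider the two tasks fitted in the identity ordering ($\tau(1)=1$, $\tau(2)=2$). The following are equivalent: (1) For every choice of labels $y_1,y_2$ such that $S=\{(X_1,y_1),(X_2,y_2)\}\in\mathcal{S}_2$ (equivalently, for every minimum-norm solution $w^\star$), $F_{\tau,S}(2)=0$. (2) $X_1P_2P_1=0_{n_1\times d}$. (3) Every principal angle between $\mathrm{range}(X_1^\top)$ and $\mathrm{range}(X_2^\top)$ is either $0$ or $\pi/2$.
   Context: Let $d\ge 1$, $T\ge1$. A task is a pair $(X_m,y_m)$ with $X_m\in\mathbb{R}^{n_m\times d}$, $y_m\in\mathbb{R}^{n_m}$ and $\operatorname{rank}(X_m)<d$. $\mathcal{S}_T$ denotes the set of collections $S=\{(X_m,y_m)\}_{m=1}^T$ of $T$ tasks such that $\|X_m\|\le 1$ (spectral norm) for all $m$ and there exists $w\in\mathbb{R}^d$ with $\|w\|\le 1$ and $y_m=X_mw$ for all $m$. A task ordering is a map $\tau:\mathbb{N}^+\to\{1,\dots,T\}$. Given $S$ and $\tau$, the iterates are $w_0=0$ and $w_t=w_{t-1}+X_{\tau(t)}^+(y_{\tau(t)}-X_{\tau(t)}w_{t-1})$ for $t\ge1$, where $A^+$ is the Moore–Penrose pseudoinverse (equivalently, $w_t$ is the Euclidean projection of $w_{t-1}$ onto $\{w: X_{\tau(t)}w=y_{\tau(t)}\}$).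 The forgetting at iteration $k$ is $F_{\tau,S}(k)=\frac1k\sum_{t=1}^k\|X_{\tau(t)}w_k-y_{\tau(t)}\|^2$. $w^\star$ denotes the minimum Euclidean-norm vector with $X_mw^\star=y_m$ for all $m$. $P_m=I-X_m^+X_m$ is the orthogonal projection onto $\ker X_m$. Principal angles: for data matrices $X_1,X_2$ let $r=\min(\operatorname{rank}X_1,\operatorname{rank}X_2)$. The principal angles $0\le\theta_1\le\dots\le\theta_r\le\pi/2$ between $\mathrm{range}(X_1^\top)$ and $\mathrm{range}(X_2^\top)$ are defined recursively by $\cos\theta_i=|u_i^\top v_i|$, where $(u_i,v_i)$ maximizes $|u^\top v|$ over unit vectors $u\in\mathrm{range}(X_1^\top)$, $v\in\mathrm{range}(X_2^\top)$ with $u\perp u_j$, $v\perp v_j$ for all $j<i$. *)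

From HB Require Import structures.
From mathcomp Require Import all_boot all_order all_algebra.
From mathcomp Require Import reals trigo.
From Stdlib Require ClassicalEpsilon.

Set Implicit Arguments.
Unset Strict Implicit.
Unset Printing Implicit Defensive.

Import Order.TTheory GRing.Theory Num.Theory.
Local Open Scope ring_scope.

Section Defs.
Variable R : realType.

Definition dotv {k : nat} (u v : 'cV[R]_k) : R := (u^T *m v) 0 0.
Definition sqnorm {k : nat} (v : 'cV[R]_k) : R := dotv v v.

Definition spec_norm_le1 {n d : nat} (X : 'M[R]_(n, d)) : Prop :=
  forall v : 'cV[R]_d, sqnorm (X *m v) <= sqnorm v.

Definition is_pinv {n d : nat} (X : 'M[R]_(n, d)) (Z : 'M[R]_(d, n)) : Prop :=
  [/\ X *m Z *m X = X, Z *m X *m Z = Z,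
      (X *m Z)^T = X *m Z & (Z *m X)^T = Z *m X].

Definition pinv {n d : nat} (X : 'M[R]_(n, d)) : 'M[R]_(d, n) :=
  ClassicalEpsilon.epsilon (inhabits 0) (is_pinv X).

Definition kerproj {n d : nat} (X : 'M[R]_(n, d)) : 'M[R]_d :=
  1%:M - pinv X *m X.

(* A collection of T tasks (X_m, y_m), m : 'I_T, with X_m of size n_m x d.
   Orderings tau : nat -> 'I_T (only values at t >= 1 matter). *)
Fixpoint iterate {T d : nat} (n : 'I_T -> nat)
    (X : forall m, 'M[R]_(n m, d)) (y : forall m, 'cV[R]_(n m))
    (tau : nat -> 'I_T) (t : nat) : 'cV[R]_d :=
  match t with
  | 0 => 0
  | t'.+1 =>
      let w := iterate X y tau t' in
      w + pinv (X (tau t)) *m (y (tau t) - X (tau t) *m w)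
  end.

Definition forgetting {T d : nat} (n : 'I_T -> nat)
    (X : forall m, 'M[R]_(n m, d)) (y : forall m, 'cV[R]_(n m))
    (tau : nat -> 'I_T) (k : nat) : R :=
  (k%:R)^-1 * \sum_(1 <= t < k.+1)
     sqnorm (X (tau t) *m iterate X y tau k - y (tau t)).

Definition in_ST {T d : nat} (n : 'I_T -> nat)
    (X : forall m, 'M[R]_(n m, d)) (y : forall m, 'cV[R]_(n m)) : Prop :=
  [/\ forall m, (\rank (X m) < d)%N,
      forall m, spec_norm_le1 (X m) &
      exists w : 'cV[R]_d, sqnorm w <= 1 /\ forall m, y m = X m *m w].

(* The identity ordering tau(t) = t (tasks 1..T are 'I_T indices 0..T-1). *)
Definition id_ordering (T : nat) : nat -> 'I_T.+1 := fun t => inord t.-1.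

Definition in_rowspace {n d : nat} (A : 'M[R]_(n, d)) (u : 'cV[R]_d) : Prop :=
  exists z : 'cV[R]_n, u = A^T *m z.

(* Admissible pairs at step i of the recursive definition of principal
   angles, given previously chosen u_j, v_j (j < i). *)
Definition pa_admissible {n1 n2 d : nat} (A : 'M[R]_(n1, d)) (B : 'M[R]_(n2, d))
    (u v : nat -> 'cV[R]_d) (i : nat) (u' v' : 'cV[R]_d) : Prop :=
  [/\ in_rowspace A u', in_rowspace B v', sqnorm u' = 1, sqnorm v' = 1 &
      forall j, (j < i)%N -> dotv u' (u j) = 0 /\ dotv v' (v j) = 0].

Definition principal_system {n1 n2 d : nat} (A : 'M[R]_(n1, d)) (B : 'M[R]_(n2, d))
    (u v : nat -> 'cV[R]_d) : Prop :=
  forall i, (i < minn (\rank A) (\rank B))%N ->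
    pa_admissible A B u v i (u i) (v i) /\
    forall u' v', pa_admissible A B u v i u' v' ->
      `|dotv u' v'| <= `|dotv (u i) (v i)|.

Definition principal_angle {d : nat} (u v : nat -> 'cV[R]_d) (i : nat) : R :=
  acos `|dotv (u i) (v i)|.

End Defs.

(* Write Q_m = X_m^+ X_m for the orthogonal projection onto range(X_m^T), so that
   P_m = I - Q_m.  With labels y_m = X_m w the second iterate is w - P_2 P_1 w, the
   forgetting at step 2 is |X_1 P_2 P_1 w|^2 / 2, and (1) says X_1 P_2 P_1 = 0.  Since
   X_1 = X_1 Q_1 this reads Q_1 Q_2 Q_1 = Q_1 Q_2, which for symmetric projections
   means that Q_1 and Q_2 commute.

   If they commute and the earlier principal vectors u_j = +-v_j lie in both row
   spaces, then Q_2 u_i lies in both row spaces, is orthogonal to the earlier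
   vectors and has the same inner product with v_i as u_i; so if the i-th cosine
   is nonzero, the admissible pair (Q_2 u_i, Q_2 u_i), normalised, forces it to
   be 1. Conversely, if the cosines are 0 or 1, let k be the first index with
   cosine 0 (or the number of angles). The u_j with j < k span a common
   subspace, and Q_2 kills every b in range(X_1^T) orthogonal to them: otherwise
   the normalised pair (b, Q_2 b) would have positive cosine at step k, and when
   all cosines are 1 the u_j span one of the row spaces. Hence Q_2 maps
   range(X_1^T) into itself. For (3) -> (2) a system of principal vectors must
   exist; it is built step by step, each maximum being attained on the compact
   set of admissible pairs. *)

From HB Require Import structures.
From mathcomp Require Import all_boot all_order all_algebra.
From mathcomp Require Import all_classical all_reals all_analysis.
From mathcomp Require Import lra.
From Stdlib Require ClassicalEpsilon.

Set Implicit Arguments.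
Unset Strict Implicit.
Unset Printing Implicit Defensive.
Import Order.TTheory GRing.Theory Num.Theory numFieldNormedType.Exports.
Local Open Scope ring_scope.

Section InnerProduct.
Variables (R : realType) (k : nat).
Implicit Types (a b w : 'cV[R]_k).

Lemma dotvE a b : dotv a b = \sum_i a i 0 * b i 0.
Proof. by rewrite /dotv mxE; apply: eq_bigr => i _; rewrite mxE. Qed.

Lemma dotvC a b : dotv a b = dotv b a.
Proof. by rewrite !dotvE; apply: eq_bigr => i _; rewrite mulrC. Qed.

Lemma dotv_mulmxl m (M : 'M[R]_(m, k)) a (c : 'cV[R]_m) :
  dotv (M *m a) c = dotv a (M^T *m c).
Proof. by rewrite /dotv trmx_mul mulmxA. Qed.

Lemma dotvDl a b w : dotv (a + b) w = dotv a w + dotv b w.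
Proof. by rewrite /dotv linearD /= mulmxDl mxE. Qed.

Lemma dotvZl (x : R) a w : dotv (x *: a) w = x * dotv a w.
Proof. by rewrite /dotv linearZ /= -scalemxAl mxE. Qed.

Lemma dotvZr (x : R) a w : dotv w (x *: a) = x * dotv w a.
Proof. by rewrite dotvC dotvZl dotvC. Qed.

Lemma dotvNl a w : dotv (- a) w = - dotv a w.
Proof. by rewrite -scaleN1r dotvZl mulN1r. Qed.

Lemma dotvNr a w : dotv w (- a) = - dotv w a.
Proof. by rewrite dotvC dotvNl dotvC. Qed.

Lemma dotvBl a b w : dotv (a - b) w = dotv a w - dotv b w.
Proof. by rewrite dotvDl dotvNl. Qed.

Lemma dotv0l w : dotv 0 w = 0.
Proof. by rewrite /dotv linear0 mul0mx mxE. Qed.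

Lemma dotv_suml (I : Type) (s : seq I) (F : I -> 'cV[R]_k) w :
  dotv (\sum_(j <- s) F j) w = \sum_(j <- s) dotv (F j) w.
Proof. by rewrite /dotv raddf_sum mulmx_suml summxE. Qed.

Lemma sqnorm_ge0 a : 0 <= sqnorm a.
Proof. by rewrite /sqnorm dotvE sumr_ge0 // => i _; rewrite -expr2 sqr_ge0. Qed.

Lemma sqnorm_eq0 a : sqnorm a = 0 -> a = 0.
Proof.
rewrite /sqnorm dotvE => /eqP; rewrite psumr_eq0 => [/allP H|i _]; last first.
  by rewrite -expr2 sqr_ge0.
apply/matrixP => i j; rewrite (ord1 j) mxE.
by have := H i (mem_index_enum _); rewrite -expr2 sqrf_eq0 => /eqP.
Qed.

Lemma sqnorm_gt0 a : a != 0 -> 0 < sqnorm a.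
Proof.
by move=> a0; rewrite lt_def sqnorm_ge0 andbT; apply: contraNneq a0 => /sqnorm_eq0->.
Qed.

Lemma sqnorm0 : sqnorm (0 : 'cV[R]_k) = 0.
Proof. exact: dotv0l. Qed.

Lemma sqnormN a : sqnorm (- a) = sqnorm a.
Proof. by rewrite /sqnorm dotvNl dotvNr opprK. Qed.

Lemma sqnormZ (x : R) a : sqnorm (x *: a) = x ^+ 2 * sqnorm a.
Proof. by rewrite /sqnorm dotvZl dotvZr mulrA expr2. Qed.

Lemma sqnormD a b : sqnorm (a + b) = sqnorm a + 2 * dotv a b + sqnorm b.
Proof. rewrite /sqnorm !dotvDl ![dotv _ (a + b)]dotvC !dotvDl (dotvC b a); lra. Qed.

Lemma sqnormB a b : sqnorm (a - b) = sqnorm a - 2 * dotv a b + sqnorm b.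
Proof. by rewrite sqnormD /sqnorm dotvNl !dotvNr opprK mulrN. Qed.

Lemma sqnorm_delta (j : 'I_k) : sqnorm (delta_mx j 0 : 'cV[R]_k) = 1.
Proof. by rewrite /sqnorm /dotv trmx_delta mul_delta_mx mxE !eqxx. Qed.

Lemma unit_coord_bound a (j : 'I_k) : sqnorm a = 1 -> -1 <= a j 0 <= 1.
Proof.
move=> a1; have : a j 0 ^+ 2 <= 1.
  rewrite -a1 /sqnorm dotvE (bigD1 j) //= -expr2 lerDl sumr_ge0 // => l _.
  by rewrite -expr2 sqr_ge0.
by move=> h; apply/andP; split; nra.
Qed.

Lemma unit_dotv_le1 a b : sqnorm a = 1 -> sqnorm b = 1 -> `|dotv a b| <= 1.
Proof.
move=> a1 b1; have := sqnorm_ge0 (a - b); have := sqnorm_ge0 (a + b).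
rewrite sqnormB sqnormD a1 b1 ler_norml => h1 h2; apply/andP; split; lra.
Qed.

Lemma unit_dotv_eq1 a b : sqnorm a = 1 -> sqnorm b = 1 -> `|dotv a b| = 1 ->
  b = a \/ b = - a.
Proof.
move=> a1 b1 /eqP; rewrite eqr_norml => /andP[/orP[]/eqP ab _].
  left; have : sqnorm (a - b) = 0 by rewrite sqnormB a1 b1 ab; lra.
  by move/sqnorm_eq0/eqP; rewrite subr_eq0 => /eqP.
right; have : sqnorm (a + b) = 0 by rewrite sqnormD a1 b1 ab; lra.
by move/sqnorm_eq0/eqP; rewrite addr_eq0 => /eqP ->; rewrite opprK.
Qed.

Definition normalize a : 'cV[R]_k := (Num.sqrt (sqnorm a))^-1 *: a.

Lemma sqnorm_normalize a : a != 0 -> sqnorm (normalize a) = 1.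
Proof.
move=> a0; have a_gt0 := sqnorm_gt0 a0.
by rewrite sqnormZ exprVn sqr_sqrtr ?ltW // mulVf // lt0r_neq0.
Qed.

Lemma normalize_scale_gt0 a : a != 0 -> 0 < (Num.sqrt (sqnorm a))^-1.
Proof. by move=> a0; rewrite invr_gt0 sqrtr_gt0 sqnorm_gt0. Qed.

Lemma mx_cV_eq m (M N : 'M[R]_(m, k)) :
  (forall a, M *m a = N *m a) -> M = N.
Proof.
move=> MN; apply/matrixP => i j.
by have /matrixP/(_ i 0) := MN (delta_mx j 0); rewrite -!colE !mxE.
Qed.

End InnerProduct.

Section PseudoInverse.
Variable R : realType.

Lemma row_free_gram_unit r k (M : 'M[R]_(r, k)) : row_free M -> M *m M^T \in unitmx.
Proof.
move=> fM; rewrite -row_free_unit; apply/inj_row_free => x xMM.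
have : sqnorm (x *m M)^T = 0.
  by rewrite /sqnorm /dotv trmxK trmx_mul mulmxA -(mulmxA x) xMM mul0mx mxE.
by move/sqnorm_eq0/eqP; rewrite trmx_eq0 -(mul0mx _ M) => /eqP/(row_free_inj fM).
Qed.

Lemma is_pinv_rank_factor n k r (X : 'M[R]_(n, k)) (C : 'M[R]_(n, r))
    (F : 'M[R]_(r, k)) : C *m F = X -> row_free F -> row_free C^T ->
  is_pinv X (F^T *m invmx (F *m F^T) *m invmx (C^T *m C) *m C^T).
Proof.
move=> <- fF fC; have uG := row_free_gram_unit fF.
have uH := row_free_gram_unit fC; rewrite trmxK in uH.
set G := F *m F^T in uG *; set H := C^T *m C in uH *.
have GT : G^T = G by rewrite /G trmx_mul trmxK.
have HT : H^T = H by rewrite /H trmx_mul trmxK.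
have XZ : C *m F *m (F^T *m invmx G *m invmx H *m C^T) = C *m invmx H *m C^T.
  by rewrite !mulmxA -(mulmxA C F F^T) -/G mulmxK.
have ZX : F^T *m invmx G *m invmx H *m C^T *m (C *m F) = F^T *m invmx G *m F.
  by rewrite !mulmxA -(mulmxA _ C^T C) -/H mulmxKV.
split.
- by rewrite XZ !mulmxA -(mulmxA _ C^T C) -/H mulmxKV.
- by rewrite ZX !mulmxA -(mulmxA _ F F^T) -/G mulmxKV.
- by rewrite XZ !trmx_mul trmxK trmx_inv HT mulmxA.
- by rewrite ZX !trmx_mul trmxK trmx_inv GT mulmxA.
Qed.

Lemma pinvP n k (X : 'M[R]_(n, k)) : is_pinv X (pinv X).
Proof.
apply: ClassicalEpsilon.epsilon_spec; eexists.
apply: (is_pinv_rank_factor (mulmx_base X)); first exact: row_base_free.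
by rewrite /row_free mxrank_tr; exact: col_base_full.
Qed.

End PseudoInverse.

Section RowSpaceProjection.
Variables (R : realType) (n k : nat) (X : 'M[R]_(n, k)).

Definition rowproj : 'M[R]_k := pinv X *m X.

Lemma rowproj_sym : rowproj^T = rowproj.
Proof. by case: (pinvP X). Qed.

Lemma mulmx_rowproj : X *m rowproj = X.
Proof. by case: (pinvP X) => XZX _ _ _; rewrite mulmxA. Qed.

Lemma rowproj_idem : rowproj *m rowproj = rowproj.
Proof. by case: (pinvP X) => _ ZXZ _ _; rewrite /rowproj mulmxA ZXZ. Qed.

Lemma dotv_rowproj (a b : 'cV[R]_k) : dotv (rowproj *m a) b = dotv a (rowproj *m b).
Proof. by rewrite dotv_mulmxl rowproj_sym. Qed.

Lemma in_rowspaceP (a : 'cV[R]_k) : in_rowspace X a <-> rowproj *m a = a.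
Proof.
split=> [[z ->]|Qa]; first by rewrite mulmxA -{1}rowproj_sym -trmx_mul mulmx_rowproj.
by exists ((pinv X)^T *m a); rewrite mulmxA -trmx_mul rowproj_sym Qa.
Qed.

Lemma kerprojE : kerproj X = 1%:M - rowproj.
Proof. by []. Qed.

Lemma mulmx_kerproj : X *m kerproj X = 0.
Proof. by rewrite kerprojE mulmxBr mulmx1 mulmx_rowproj subrr. Qed.

End RowSpaceProjection.

Section TwoTaskForgetting.
Variables (R : realType) (d : nat) (n : 'I_2 -> nat).
Variable X : forall m : 'I_2, 'M[R]_(n m, d).
Local Notation X1 := (X ord0).
Local Notation X2 := (X ord_max).

Lemma id_ordering1 : id_ordering 1 1 = ord0.
Proof. exact/val_inj/inordK. Qed.

Lemma id_ordering2 : id_ordering 1 2 = ord_max.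
Proof. exact/val_inj/inordK. Qed.

Lemma iterate_two (y : forall m, 'cV[R]_(n m)) w : (forall m, y m = X m *m w) ->
  iterate X y (id_ordering 1) 2 = w - kerproj X2 *m kerproj X1 *m w.
Proof.
move=> yXw; rewrite /= id_ordering1 id_ordering2 !yXw mulmx0 subr0 add0r.
rewrite !kerprojE /rowproj -!mulmxA -mulmxBr.
rewrite !mulmxBl !mul1mx !mulmxBr ?mulmx1 !mulmxA -[w - _ - _]addrA -opprD.
by rewrite opprB [RHS]addrC subrK.
Qed.

Lemma forgetting_two (y : forall m, 'cV[R]_(n m)) w : (forall m, y m = X m *m w) ->
  forgetting X y (id_ordering 1) 2 =
  2^-1 * sqnorm (X1 *m kerproj X2 *m kerproj X1 *m w).
Proof.
move=> yXw; rewrite /forgetting big_ltn // big_nat1 id_ordering1 id_ordering2.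
rewrite (iterate_two yXw) !yXw; move: (mulmx_kerproj X2).
move: (kerproj X2) (kerproj X1) => P2 P1 XP2.
rewrite !mulmxBr addrAC subrr add0r sqnormN !mulmxA.
by rewrite XP2 !mul0mx subr0 subrr sqnorm0 addr0.
Qed.

Lemma forgetting_two_eq0P :
  (forall m, spec_norm_le1 (X m)) -> (forall m, (\rank (X m) < d)%N) ->
  (forall y : forall m, 'cV[R]_(n m),
      in_ST X y -> forgetting X y (id_ordering 1) 2 = 0) <->
  X1 *m kerproj X2 *m kerproj X1 = 0.
Proof.
move=> Xle1 Xrk; split => [F0|M0 y [_ _ [w [_ yXw]]]]; last first.
  by rewrite (forgetting_two yXw) M0 !mul0mx sqnorm0 mulr0.
apply/matrixP => i j.
have ST : in_ST X (fun m => X m *m (delta_mx j 0 : 'cV[R]_d)).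
  by split => //; exists (delta_mx j 0); rewrite sqnorm_delta.
move/eqP: (F0 _ ST); rewrite (forgetting_two (w := delta_mx j 0)) //.
rewrite mulf_eq0 invr_eq0 pnatr_eq0 /= => /eqP/sqnorm_eq0.
by rewrite -colE => /matrixP/(_ i 0); rewrite !mxE.
Qed.

End TwoTaskForgetting.

Lemma symmetric_mulmx_comm (R : comPzRingType) k (A B : 'M[R]_k) :
  A^T = A -> B^T = B -> A *m B *m A = A *m B -> A *m B = B *m A.
Proof.
by move=> AT BT ABA; move/(congr1 trmx): (ABA); rewrite !trmx_mul AT BT mulmxA ABA.
Qed.

Section OrthonormalFamilies.
Variables (R : realType) (d : nat).

Lemma dotv_orth_residual (u : nat -> 'cV[R]_d) k a l :
  (forall j l, (j < k)%N -> (l < k)%N -> dotv (u j) (u l) = (j == l)%:R) ->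
  (l < k)%N -> dotv (a - \sum_(j < k) dotv (u j) a *: u j) (u l) = 0.
Proof.
move=> uON lk; rewrite dotvBl dotv_suml (bigD1 (Ordinal lk)) //= big1.
  by rewrite dotvZl uON // eqxx mulr1 addr0 dotvC subrr.
move=> j jl; rewrite dotvZl uON //; case: eqP => [jl'|_]; last by rewrite mulr0.
by move: jl; rewrite -val_eqE /= jl' eqxx.
Qed.

Lemma rowspace_orthonormal_eq0 m (Y : 'M[R]_(m, d)) (u : nat -> 'cV[R]_d) z :
  (forall j, (j < \rank Y)%N -> in_rowspace Y (u j)) ->
  (forall j l, (j < \rank Y)%N -> (l < \rank Y)%N -> dotv (u j) (u l) = (j == l)%:R) ->
  in_rowspace Y z -> (forall l, (l < \rank Y)%N -> dotv z (u l) = 0) -> z = 0.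
Proof.
have rowspace_sub (a : 'cV[R]_d) : in_rowspace Y a -> (a^T <= Y)%MS.
  by case=> c ->; rewrite trmx_mul trmxK submxMl.
move=> uY uON zY zu.
pose U : 'M[R]_(\rank Y, d) := \matrix_(j, i) u j i 0.
have UU : U *m U^T = 1%:M.
  apply/matrixP => j l; rewrite !mxE -(uON j l (ltn_ord j) (ltn_ord l)) dotvE.
  by apply: eq_bigr => i _; rewrite !mxE.
have fU : row_free U by apply/row_freeP; exists U^T.
have sUY : (U <= Y)%MS.
  apply/row_subP => j; have -> : row j U = (u j)^T by apply/rowP => i; rewrite !mxE.
  exact/rowspace_sub/uY.
have sYU : (Y <= U)%MS by rewrite -(mxrank_leqif_sup sUY).2 (eqP fU).
have /submxP [D zD] := submx_trans (rowspace_sub _ zY) sYU.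
have Uz : U *m z = 0.
  apply/matrixP => j i; rewrite (ord1 i) [RHS]mxE -(zu j (ltn_ord j)) dotvC dotvE mxE.
  by apply: eq_bigr => l _; rewrite !mxE.
by apply: sqnorm_eq0; rewrite /sqnorm /dotv zD -mulmxA Uz mulmx0 mxE.
Qed.

Lemma rowspace_orth_exists m (Y : 'M[R]_(m, d)) (w : nat -> 'cV[R]_d) i :
  (i < \rank Y)%N -> exists2 z : 'cV[R]_d, z != 0 &
    in_rowspace Y z /\ forall j, (j < i)%N -> dotv z (w j) = 0.
Proof.
move=> iY; pose B := row_base Y; pose W : 'M[R]_(i, d) := \matrix_(j, l) w j l 0.
have : kermx (B *m W^T) != 0.
  by rewrite kermx_eq0 /row_free neq_ltn (leq_ltn_trans (rank_leq_col _) iY).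
case/rowV0Pn => x /sub_kermxP xBW x0.
exists (x *m B)^T.
  rewrite trmx_eq0; apply: contra x0 => /eqP xB0.
  by apply/eqP/(row_free_inj (row_base_free Y)); rewrite xB0 mul0mx.
split.
  have /submxP [D xBD] : (x *m B <= Y)%MS by rewrite -(eq_row_base Y) submxMl.
  by exists D^T; rewrite -trmx_mul -xBD.
move=> j ji; rewrite dotvC dotvE.
have /matrixP/(_ (Ordinal ji) 0) : W *m (x *m B)^T = 0.
  by rewrite -(trmxK W) -trmx_mul -mulmxA xBW trmx0.
by rewrite !mxE => h; rewrite -[RHS]h; apply: eq_bigr => l _; rewrite !mxE.
Qed.

End OrthonormalFamilies.

Section TwoProjections.
Variables (R : realType) (d n1 n2 : nat) (X1 : 'M[R]_(n1, d)) (X2 : 'M[R]_(n2, d)).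
Local Notation Q1 := (rowproj X1).
Local Notation Q2 := (rowproj X2).

Lemma mul_kerproj_eq0_comm :
  X1 *m kerproj X2 *m kerproj X1 = 0 <-> Q1 *m Q2 = Q2 *m Q1.
Proof.
have -> : X1 *m kerproj X2 *m kerproj X1 = X1 *m (Q2 *m Q1 - Q2).
  rewrite !kerprojE !mulmxBr !mulmx1 !mulmxBl mulmx_rowproj !mulmxA.
  by rewrite opprB addrC addrA subrK.
split=> [XM0|C]; last by rewrite -C mulmxBr mulmxA mulmx_rowproj subrr.
have : Q1 *m (Q2 *m Q1 - Q2) = 0 by rewrite -mulmxA XM0 mulmx0.
rewrite mulmxBr mulmxA => /eqP; rewrite subr_eq0 => /eqP.
exact: symmetric_mulmx_comm (rowproj_sym X1) (rowproj_sym X2).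
Qed.

Local Notation r := (minn (\rank X1) (\rank X2)).

Lemma pa_admissible_le u v i j a b :
  (j <= i)%N -> pa_admissible X1 X2 u v i a b -> pa_admissible X1 X2 u v j a b.
Proof.
by move=> ji [? ? ? ? orth]; split => // l lj; apply: orth (leq_trans lj ji).
Qed.

Lemma pa_admissible_normalize u v i a b :
  a != 0 -> b != 0 -> Q1 *m a = a -> Q2 *m b = b ->
  (forall j, (j < i)%N -> dotv a (u j) = 0 /\ dotv b (v j) = 0) ->
  pa_admissible X1 X2 u v i (normalize a) (normalize b).
Proof.
move=> a0 b0 Q1a Q2b orth; split; rewrite ?sqnorm_normalize //.
- by apply/in_rowspaceP; rewrite -scalemxAr Q1a.
- by apply/in_rowspaceP; rewrite -scalemxAr Q2b.
by move=> j ji; have [aj bj] := orth j ji; rewrite !dotvZl aj bj !mulr0.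
Qed.

Section PrincipalSystem.
Variables u v : nat -> 'cV[R]_d.
Hypothesis PS : principal_system X1 X2 u v.

(* Each earlier pair is admissible at step i, so the cosines are nonincreasing. *)
Lemma principal_cos_neq0 i j : (i < r)%N -> dotv (u i) (v i) != 0 ->
  (j < i)%N -> dotv (u j) (v j) != 0.
Proof.
move=> ir cos_i ji; have [adm _] := PS ir; have [_ jmax] := PS (ltn_trans ji ir).
apply: contraNneq cos_i => cos_j.
by have := jmax _ _ (pa_admissible_le (ltnW ji) adm); rewrite cos_j normr0 normr_le0.
Qed.

Lemma principal_cos1 j : (j < r)%N -> `|dotv (u j) (v j)| = 1 ->
  [/\ Q1 *m u j = u j, Q2 *m u j = u j & forall w, dotv w (u j) = 0 -> dotv w (v j) = 0].
Proof.
move=> jr cos_j; have [[/in_rowspaceP Q1u /in_rowspaceP Q2v uj1 vj1 _] _] := PS jr.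
have [vu|vu] := unit_dotv_eq1 uj1 vj1 cos_j; rewrite vu in Q2v *; first by split=> // w.
split=> // [|w wu]; last by rewrite dotvNr wu oppr0.
by apply: oppr_inj; rewrite -mulmxN.
Qed.

Lemma principal_orthonormal j l : (j < r)%N -> (l < r)%N ->
  dotv (u j) (u l) = (j == l)%:R.
Proof.
move=> jr lr; case: (ltngtP j l) => [jl|lj|<-].
- by have [[_ _ _ _ orth] _] := PS lr; rewrite dotvC (orth j jl).1.
- by have [[_ _ _ _ orth] _] := PS jr; rewrite (orth l lj).1.
- by have [[_ _ uj1 _ _] _] := PS jr.
Qed.

Lemma comm_principal_cos01 : Q1 *m Q2 = Q2 *m Q1 ->
  forall i, (i < r)%N -> `|dotv (u i) (v i)| = 0 \/ `|dotv (u i) (v i)| = 1.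
Proof.
move=> C; elim/ltn_ind => i IH ir.
have [->|cos_i] := eqVneq (dotv (u i) (v i)) 0; [by left; rewrite normr0|right].
have [[/in_rowspaceP Q1u /in_rowspaceP Q2v ui1 vi1 orth] imax] := PS ir.
have prev j : (j < i)%N -> [/\ Q1 *m u j = u j, Q2 *m u j = u j &
    forall w, dotv w (u j) = 0 -> dotv w (v j) = 0].
  move=> ji; have jr := ltn_trans ji ir; apply: principal_cos1 => //.
  have := principal_cos_neq0 ir cos_i ji; rewrite -normr_eq0.
  by case: (IH j ji jr) => ->; rewrite ?eqxx.
pose w := Q2 *m u i.
have Q1w : Q1 *m w = w by rewrite /w mulmxA C -mulmxA Q1u.
have Q2w : Q2 *m w = w by rewrite /w mulmxA rowproj_idem.
have wv : dotv w (v i) = dotv (u i) (v i) by rewrite /w dotv_rowproj Q2v.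
have w0 : w != 0 by apply: contra_neq cos_i; rewrite -wv => ->; rewrite dotv0l.
have wu j : (j < i)%N -> dotv w (u j) = 0.
  by move=> ji; have [_ Q2uj _] := prev j ji; rewrite /w dotv_rowproj Q2uj (orth j ji).1.
have adm : pa_admissible X1 X2 u v i (normalize w) (normalize w).
  apply: pa_admissible_normalize => // j ji; have [_ _ uv] := prev j ji.
  by split; [|apply: uv]; apply: wu.
have := imax _ _ adm; rewrite -/(sqnorm _) sqnorm_normalize // normr1 => ge1.
by apply/eqP; rewrite eq_le ge1 unit_dotv_le1.
Qed.

Section CosineDichotomy.
Variable k : nat.
Hypothesis k_le_r : (k <= r)%N.
Hypothesis prefix_cos1 : forall j, (j < k)%N -> `|dotv (u j) (v j)| = 1.
Hypothesis cos_k_eq0 : (k < r)%N -> dotv (u k) (v k) = 0.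

Lemma prefix_principal j : (j < k)%N -> [/\ Q1 *m u j = u j, Q2 *m u j = u j &
    forall w, dotv w (u j) = 0 -> dotv w (v j) = 0].
Proof. by move=> jk; apply: principal_cos1 (prefix_cos1 jk); apply: leq_trans k_le_r. Qed.

(* If the residual had a nonzero image t under Q2, the normalised pair (b, t)
   would be admissible at step k with positive cosine; if k = r, the vectors
   u_j (j < r) already span one of the two row spaces. *)
Lemma rowproj_residual_eq0 b : Q1 *m b = b ->
  (forall l, (l < k)%N -> dotv b (u l) = 0) -> Q2 *m b = 0.
Proof.
move=> Q1b bu; set t := Q2 *m b.
have Q2t : Q2 *m t = t by rewrite /t mulmxA rowproj_idem.
have tu l : (l < k)%N -> dotv t (u l) = 0.
  by move=> lk; have [_ Q2u _] := prefix_principal lk; rewrite dotv_rowproj Q2u bu.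
have uON j l : (j < k)%N -> (l < k)%N -> dotv (u j) (u l) = (j == l)%:R.
  by move=> jk lk; apply: principal_orthonormal; apply: leq_trans k_le_r.
case: (ltnP k r) => [kr|rk].
  apply/eqP/negPn/negP => t0.
  have b0 : b != 0 by apply: contraNneq t0 => b0; rewrite /t b0 mulmx0.
  have adm : pa_admissible X1 X2 u v k (normalize b) (normalize t).
    apply: pa_admissible_normalize => // l lk; have [_ _ uv] := prefix_principal lk.
    by split; [|apply: uv]; [apply: bu|apply: tu].
  have := (PS kr).2 _ _ adm; rewrite cos_k_eq0 // normr0 normr_le0 dotvZl dotvZr.
  have -> : dotv b t = sqnorm t by rewrite /sqnorm {2}/t dotv_rowproj Q2t.
  by rewrite gt_eqF // !mulr_gt0 ?sqnorm_gt0 ?normalize_scale_gt0.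
have kr : k = r by apply/eqP; rewrite eqn_leq k_le_r rk.
case: (leqP (\rank X1) (\rank X2)) => rk12.
  have rE : k = \rank X1 by rewrite kr; apply/minn_idPl.
  suff b0 : b = 0 by rewrite /t b0 mulmx0.
  apply: (@rowspace_orthonormal_eq0 _ _ _ X1 u); rewrite -?rE //; last exact/in_rowspaceP.
  by move=> j jk; have [Q1u _ _] := prefix_principal jk; apply/in_rowspaceP.
have rE : k = \rank X2 by rewrite kr; apply/minn_idPr/ltnW.
apply: (@rowspace_orthonormal_eq0 _ _ _ X2 u); rewrite -?rE //; last exact/in_rowspaceP.
by move=> j jk; have [_ Q2u _] := prefix_principal jk; apply/in_rowspaceP.
Qed.

Lemma rowproj_stable (a : 'cV[R]_d) : Q1 *m a = a -> Q1 *m (Q2 *m a) = Q2 *m a.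
Proof.
move=> Q1a; pose p := \sum_(j < k) dotv (u j) a *: u j.
have Qp (Q : 'M[R]_d) : (forall j, (j < k)%N -> Q *m u j = u j) -> Q *m p = p.
  by move=> Qu; rewrite mulmx_sumr; apply: eq_bigr => j _; rewrite -scalemxAr Qu.
have Q1p : Q1 *m p = p by apply: Qp => j /prefix_principal[].
have Q2p : Q2 *m p = p by apply: Qp => j /prefix_principal[].
have : Q2 *m (a - p) = 0.
  apply: rowproj_residual_eq0; first by rewrite mulmxBr Q1a Q1p.
  move=> l lk; apply: dotv_orth_residual lk => j j' jk j'k.
  by apply: principal_orthonormal; apply: leq_trans k_le_r.
by rewrite mulmxBr Q2p => /eqP; rewrite subr_eq0 => /eqP ->.
Qed.

End CosineDichotomy.

Lemma principal_cos01_comm :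
  (forall i, (i < r)%N -> `|dotv (u i) (v i)| = 0 \/ `|dotv (u i) (v i)| = 1) ->
  Q1 *m Q2 = Q2 *m Q1.
Proof.
move=> cos01.
have exk : exists i, (r <= i)%N || (dotv (u i) (v i) == 0) by exists r; rewrite leqnn.
have [k Pk kmin] := ex_minnP exk.
have k_le_r : (k <= r)%N by apply: kmin; rewrite leqnn.
have prefix j : (j < k)%N -> `|dotv (u j) (v j)| = 1.
  move=> jk; have jr := leq_trans jk k_le_r.
  case: (cos01 j jr) => // /normr0_eq0 cos_j.
  by have := kmin j; rewrite cos_j eqxx orbT leqNgt jk => /(_ isT).
have cos_k : (k < r)%N -> dotv (u k) (v k) = 0.
  by move=> kr; apply/eqP; move: Pk; rewrite leqNgt kr.
have QQQ : Q1 *m Q2 *m Q1 = Q2 *m Q1.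
  apply: mx_cV_eq => a; rewrite -mulmxA -(mulmxA Q1) -(mulmxA Q2).
  by apply: (rowproj_stable k_le_r prefix cos_k); rewrite mulmxA rowproj_idem.
move: QQQ (rowproj_sym X1) (rowproj_sym X2); move: Q1 Q2 => A B ABA AT BT.
apply: symmetric_mulmx_comm => //; move/(congr1 trmx): ABA.
by rewrite !trmx_mul AT BT mulmxA.

Qed.

End PrincipalSystem.

End TwoProjections.

Section EntrywiseContinuity.
Variables (R : realType) (N d : nat).
Local Notation V := 'rV[R]_N.

Lemma continuous_sum (I : Type) (s : seq I) (F : I -> V -> R) :
  (forall i, continuous (F i)) -> continuous (fun p => \sum_(i <- s) F i p).
Proof. by move=> cF; apply: continuous_big => [|i _]; [exact: add_continuous|exact: cF]. Qed.

Definition entrywise_continuous (F : V -> 'cV[R]_d) :=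
  forall l, continuous (fun p => F p l 0).

Lemma entrywise_continuous_cst (c : 'cV[R]_d) : entrywise_continuous (fun=> c).
Proof. by move=> l; exact: cst_continuous. Qed.

Lemma entrywise_continuous_mulmx (M : 'M[R]_d) F :
  entrywise_continuous F -> entrywise_continuous (fun p => M *m F p).
Proof.
move=> cF l; under boolp.eq_fun do rewrite mxE.
by apply: continuous_sum => j x; apply: continuousM; [exact: cst_continuous|exact: cF].
Qed.

Lemma entrywise_continuous_sub F G : entrywise_continuous F ->
  entrywise_continuous G -> entrywise_continuous (fun p => F p - G p).
Proof.
move=> cF cG l; under boolp.eq_fun do rewrite !mxE.
by move=> x; apply: continuousB; [exact: cF|exact: cG].
Qed.

Lemma continuous_dotv F G : entrywise_continuous F -> entrywise_continuous G ->
  continuous (fun p => dotv (F p) (G p)).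
Proof.
move=> cF cG; under boolp.eq_fun do rewrite dotvE.
by apply: continuous_sum => j x; apply: continuousM; [exact: cF|exact: cG].
Qed.

End EntrywiseContinuity.

(* Pairs of vectors of R^d are encoded as row vectors of length 2d, for which
   the library provides compactness of boxes (rV_compact). *)
Section PairsOfVectors.
Variables (R : realType) (d : nat).
Local Notation V := 'rV[R]_(d + d).

Definition fstv (p : V) : 'cV[R]_d := (lsubmx p)^T.
Definition sndv (p : V) : 'cV[R]_d := (rsubmx p)^T.
Definition pairv (a b : 'cV[R]_d) : V := row_mx a^T b^T.

Lemma fstv_pair a b : fstv (pairv a b) = a.
Proof. by rewrite /fstv row_mxKl trmxK. Qed.

Lemma sndv_pair a b : sndv (pairv a b) = b.
Proof. by rewrite /sndv row_mxKr trmxK. Qed.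

Lemma entrywise_continuous_fstv : entrywise_continuous fstv.
Proof. by move=> l; under boolp.eq_fun do rewrite !mxE; exact: coord_continuous. Qed.

Lemma entrywise_continuous_sndv : entrywise_continuous sndv.
Proof. by move=> l; under boolp.eq_fun do rewrite !mxE; exact: coord_continuous. Qed.

End PairsOfVectors.

Section PrincipalSystemExistence.
Variables (R : realType) (d n1 n2 : nat) (X1 : 'M[R]_(n1, d)) (X2 : 'M[R]_(n2, d)).
Local Notation V := 'rV[R]_(d + d).
Local Notation r := (minn (\rank X1) (\rank X2)).

Definition pa_defect (u v : nat -> 'cV[R]_d) i (p : V) : R :=
  sqnorm (rowproj X1 *m fstv p - fstv p) + sqnorm (rowproj X2 *m sndv p - sndv p) +
  (sqnorm (fstv p) - 1) ^+ 2 + (sqnorm (sndv p) - 1) ^+ 2 +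
  \sum_(j < i) (dotv (fstv p) (u j) ^+ 2 + dotv (sndv p) (v j) ^+ 2).

Lemma pa_defect_eq0P u v i p :
  pa_admissible X1 X2 u v i (fstv p) (sndv p) <-> pa_defect u v i p = 0.
Proof.
split=> [[/in_rowspaceP Q1a /in_rowspaceP Q2b a1 b1 orth]|].
  rewrite /pa_defect Q1a Q2b a1 b1 !subrr sqnorm0 expr0n /= !add0r big1 // => j _.
  by have [-> ->] := orth j (ltn_ord j); rewrite expr0n addr0.
have sum_ge0 : 0 <= \sum_(j < i) (dotv (fstv p) (u j) ^+ 2 + dotv (sndv p) (v j) ^+ 2).
  by apply: sumr_ge0 => j _; rewrite addr_ge0 ?sqr_ge0.
move/eqP; rewrite /pa_defect !paddr_eq0 ?addr_ge0 ?sqnorm_ge0 ?sqr_ge0 //.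
move=> /andP[/andP[/andP[/andP[/eqP Q1a /eqP Q2b] a1] b1] orth].
split.
- by apply/in_rowspaceP/eqP; rewrite -subr_eq0; apply/eqP/sqnorm_eq0.
- by apply/in_rowspaceP/eqP; rewrite -subr_eq0; apply/eqP/sqnorm_eq0.
- by apply/eqP; rewrite -subr_eq0 -sqrf_eq0.
- by apply/eqP; rewrite -subr_eq0 -sqrf_eq0.
move=> j ji; move: orth; rewrite psumr_eq0 => [/allP/(_ (Ordinal ji))|l _].
  rewrite mem_index_enum => /(_ isT) /=; rewrite paddr_eq0 ?sqr_ge0 //.
  by rewrite !sqrf_eq0 => /andP[/eqP -> /eqP ->].
by rewrite addr_ge0 ?sqr_ge0.
Qed.

Lemma continuous_pa_defect u v i : continuous (pa_defect u v i).
Proof.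
have cD (f g : V -> R) : continuous f -> continuous g -> continuous (fun p => f p + g p).
  by move=> cf cg x; exact: (continuousD (cf x) (cg x)).
have csq (f : V -> R) : continuous f -> continuous (fun p => f p ^+ 2).
  move=> cf; under boolp.eq_fun do rewrite expr2.
  by move=> x; exact: (continuousM (cf x) (cf x)).
have cnorm1 (F : V -> 'cV[R]_d) : entrywise_continuous F ->
    continuous (fun p => (sqnorm (F p) - 1) ^+ 2).
  move=> cF; apply: csq => x.
  apply: (continuousB (f := fun p => sqnorm (F p)) (g := fun=> 1)).
    exact: continuous_dotv.
  exact: cst_continuous.
have cres (n : nat) (Y : 'M[R]_(n, d)) F : entrywise_continuous F ->
    continuous (fun p : V => sqnorm (rowproj Y *m F p - F p)).
  by move=> cF; apply: continuous_dotv; apply: entrywise_continuous_sub => //;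
    exact: entrywise_continuous_mulmx.
have cF := @entrywise_continuous_fstv R d; have cS := @entrywise_continuous_sndv R d.
apply: (cD); [apply: (cD); [apply: (cD); [apply: (cD)|]|]|].
- exact: cres.
- exact: cres.
- exact: cnorm1.
- exact: cnorm1.
apply: continuous_sum => j; apply: (cD); apply: (csq); apply: continuous_dotv => //;
  exact: entrywise_continuous_cst.
Qed.

Local Open Scope classical_set_scope.

Lemma pa_max_exists u v i : (i < r)%N ->
  exists a b, pa_admissible X1 X2 u v i a b /\
    forall a' b', pa_admissible X1 X2 u v i a' b' -> `|dotv a' b'| <= `|dotv a b|.
Proof.
move=> ir.
have [z1 z10 [/in_rowspaceP z1Y z1u]] :=
  rowspace_orth_exists (Y := X1) u (leq_trans ir (geq_minl _ _)).
have [z2 z20 [/in_rowspaceP z2Y z2v]] :=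
  rowspace_orth_exists (Y := X2) v (leq_trans ir (geq_minr _ _)).
pose S := [set p : V | pa_defect u v i p = 0].
have S0 : S !=set0.
  exists (pairv (normalize z1) (normalize z2)).
  apply/pa_defect_eq0P; rewrite fstv_pair sndv_pair.
  by apply: pa_admissible_normalize => // j ji; rewrite z1u ?z2v.
have S_compact : compact S.
  apply: (subclosed_compact _ (rV_compact (fun=> @segment_compact R (-1) 1))).
    exact: (continuous_closedP _).1 (@continuous_pa_defect u v i) _ (@closed_eq _ 0).
  move=> p; rewrite /S /= => /pa_defect_eq0P [_ _ a1 b1 _] j; rewrite in_itv /=.
  case: (split_ordP j) => l ->.
    by have := unit_coord_bound l a1; rewrite !mxE.
  by have := unit_coord_bound l b1; rewrite !mxE.
have cos_cont : continuous (fun p : V => `|dotv (fstv p) (sndv p)|).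
  have dotv_cont := continuous_dotv (@entrywise_continuous_fstv R d)
    (@entrywise_continuous_sndv R d).
  by move=> x; apply: (continuous_comp (dotv_cont x)); exact: norm_continuous.
have [c /set_mem /pa_defect_eq0P c_adm cmax] :=
  EVT_max_rV S0 S_compact (continuous_subspaceT cos_cont).
exists (fstv c), (sndv c); split=> // a b ab_adm.
have := cmax (pairv a b); rewrite fstv_pair sndv_pair; apply; apply: mem_set.
by apply/pa_defect_eq0P; rewrite fstv_pair sndv_pair.
Qed.

Definition principal_at (u v : nat -> 'cV[R]_d) i :=
  pa_admissible X1 X2 u v i (u i) (v i) /\
  forall a b, pa_admissible X1 X2 u v i a b -> `|dotv a b| <= `|dotv (u i) (v i)|.

Lemma pa_admissible_ext (u v u' v' : nat -> 'cV[R]_d) i a b :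
  (forall j, (j < i)%N -> u j = u' j /\ v j = v' j) ->
  pa_admissible X1 X2 u v i a b -> pa_admissible X1 X2 u' v' i a b.
Proof.
by move=> uv [? ? ? ? orth]; split => // j ji; have [<- <-] := uv j ji; apply: orth.
Qed.

Lemma principal_at_ext (u v u' v' : nat -> 'cV[R]_d) i :
  (forall j, (j <= i)%N -> u j = u' j /\ v j = v' j) ->
  principal_at u v i -> principal_at u' v' i.
Proof.
move=> uv [adm imax]; rewrite /principal_at; have [<- <-] := uv i (leqnn i).
have uv' j : (j < i)%N -> u j = u' j /\ v j = v' j by move/ltnW/uv.
split=> [|a b /(pa_admissible_ext _)]; first exact: pa_admissible_ext uv' adm.
by move=> adm'; apply/imax/adm' => j /uv' [-> ->].
Qed.

Lemma principal_prefix_exists k : exists u v : nat -> 'cV[R]_d,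
  forall i, (i < k)%N -> (i < r)%N -> principal_at u v i.
Proof.
elim: k => [|k [u [v uv_pr]]]; first by exists (fun=> 0), (fun=> 0).
have [kr|rk] := ltnP k r; last first.
  exists u, v => i; rewrite ltnS leq_eqVlt => /predU1P[->|]; last exact: uv_pr.
  by rewrite ltnNge rk.
have [a [b [adm amax]]] := pa_max_exists u v kr.
pose u' j := if j == k then a else u j; pose v' j := if j == k then b else v j.
have uv' j : (j < k)%N -> u j = u' j /\ v j = v' j by rewrite /u' /v' => /ltn_eqF ->.
exists u', v' => i; rewrite ltnS leq_eqVlt => /predU1P[->|ik ir]; last first.
  by apply: (principal_at_ext _ (uv_pr i ik ir)) => j ji; apply/uv'/(leq_ltn_trans ji).
rewrite /principal_at /u' /v' /= eqxx.
split=> [|a' b' /(pa_admissible_ext _)]; first exact: pa_admissible_ext uv' adm.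
by move=> adm'; apply/amax/adm' => j /ltn_eqF ->.
Qed.

Lemma principal_system_exists : exists u v, principal_system X1 X2 u v.
Proof.
by have [u [v uv_pr]] := principal_prefix_exists r; exists u, v => i ir; exact: uv_pr.
Qed.

End PrincipalSystemExistence.

Lemma principal_angle_cases (R : realType) (d n1 n2 : nat)
    (X1 : 'M[R]_(n1, d)) (X2 : 'M[R]_(n2, d)) u v i :
  principal_system X1 X2 u v -> (i < minn (\rank X1) (\rank X2))%N ->
  principal_angle u v i = 0 \/ principal_angle u v i = pi / 2 <->
  `|dotv (u i) (v i)| = 0 \/ `|dotv (u i) (v i)| = 1.
Proof.
move=> PS ir; have [[_ _ ui1 vi1 _] _] := PS i ir.
have cos_bound : -1 <= `|dotv (u i) (v i)| <= 1.
  by rewrite unit_dotv_le1 // andbT (le_trans (lerN10 _)).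
have [_ cos_acos] := acos_def cos_bound.
rewrite /principal_angle; split=> [[]|[]] cos_eq.
- by right; rewrite -cos_acos cos_eq cos0.
- by left; rewrite -cos_acos cos_eq cos_pihalf.
- by right; rewrite cos_eq acos0.
- by left; rewrite cos_eq acos1.
Qed.

Theorem mainTheorem1 (R : realType) (d : nat) (n : 'I_2 -> nat)
    (X : forall m : 'I_2, 'M[R]_(n m, d)) :
  (0 < d)%N ->
  (forall m, spec_norm_le1 (X m)) ->
  (forall m, (\rank (X m) < d)%N) ->
  let X1 := X ord0 in
  let X2 := X (@ord_max 1) in
  let P1 := kerproj X1 in
  let P2 := kerproj X2 in
  let cond1 := forall y : forall m : 'I_2, 'cV[R]_(n m),
      in_ST X y -> forgetting X y (id_ordering 1) 2 = 0 in
  let cond2 := X1 *m P2 *m P1 = 0 in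
  let cond3 := forall u v : nat -> 'cV[R]_d, principal_system X1 X2 u v ->
      forall i, (i < minn (\rank X1) (\rank X2))%N ->
        principal_angle u v i = 0 \/ principal_angle u v i = pi / 2 in
  (cond1 <-> cond2) /\ (cond2 <-> cond3).
Proof.
move=> _ Xle1 Xrk X1 X2 P1 P2 cond1 cond2 cond3.
split; first exact: forgetting_two_eq0P.
split=> [/mul_kerproj_eq0_comm QQ u v PS i ir|angles]; last apply/mul_kerproj_eq0_comm.
  by apply/(principal_angle_cases PS ir)/(comm_principal_cos01 PS QQ).
have [u [v PS]] := principal_system_exists X1 X2.
by apply: (principal_cos01_comm PS) => i ir; apply/(principal_angle_cases PS ir)/angles.
Qed.
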